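(* There is a family of $1$-dimensional Hegselmann–Krause systems with $n$ agents (for infinitely many $n$) and a fixed confidence bound $\varepsilon>0$, whose social networks have $|E|=\Theta(n^2)$ edges and whose initial states $S_0$ satisfy $\Phi(S_0)=\Theta(n^2\varepsilon^2)$, such that the expected potential drop in the first step under uniform random asynchronous updates is $\mathbb{E}[\Phi(S_0)-\Phi(S_1)]=\Theta(\varepsilon^2/n^3)$.
   Context: A $1$-dimensional Hegselmann–Krause system has a finite undirected graph $G=(V,E)$ (social network) with $n=|V|$ agents, a confidence bound $\varepsilon>0$, and positions $x_v(t)\in\mathbb{R}$. The influencing neighborhood is $N_v(t)=\{u:\{u,v\}\in E,\ |x_u(t)-x_v(t)|\le\varepsilon\}\cup\{v\}$. Uniform random asynchronous updates: at each step $t$ one agent $v$ is chosen uniformly at random and set to $x_v(t+1)=\frac{1}{|N_v(t)|}\sum_{u\in N_v(t)}x_u(t)$, others unchanged; $S_t$ denotes the state at time $t$. The potential of a state is $\Phi(S)=\sum_{\{u,v\}\in E}\min\{|x_u-x_v|^2,\varepsilon^2\}$. *)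

From mathcomp Require Import all_boot all_order all_algebra.
Set Implicit Arguments. Unset Strict Implicit. Unset Printing Implicit Defensive.
Import Order.TTheory GRing.Theory Num.Theory.
Local Open Scope ring_scope.

Definition simple_graph (n : nat) (e : rel 'I_n) : Prop :=
  symmetric e /\ irreflexive e.

Definition num_edges (n : nat) (e : rel 'I_n) : nat :=
  #|[set p : 'I_n * 'I_n | (p.1 < p.2)%N && e p.1 p.2]|.

Section HK.
Variable R : realFieldType.

Definition nbhd (n : nat) (e : rel 'I_n) (eps : R) (x : 'I_n -> R) (v : 'I_n)
  : {set 'I_n} :=
  [set u | (e u v && (`|x u - x v| <= eps)) || (u == v)].

Definition hk_update (n : nat) (e : rel 'I_n) (eps : R) (x : 'I_n -> R)
  (v : 'I_n) : 'I_n -> R :=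
  fun w => if w == v then
             (\sum_(u in nbhd e eps x v) x u) / (#|nbhd e eps x v|)%:R
           else x w.

Definition potential (n : nat) (e : rel 'I_n) (eps : R) (x : 'I_n -> R) : R :=
  \sum_(p : 'I_n * 'I_n | (p.1 < p.2)%N && e p.1 p.2)
     Num.min ((x p.1 - x p.2) ^+ 2) (eps ^+ 2).

Definition expected_drop (n : nat) (e : rel 'I_n) (eps : R) (x : 'I_n -> R) : R :=
  (n%:R)^-1 * \sum_(v : 'I_n) (potential e eps x - potential e eps (hk_update e eps x v)).
End HK.

(* Take the complete graph on n agents, confidence bound 1, agents 0 and 1 at
   distance 1/n and every other agent i at position 2i.  Only the edge {0,1} is
   within the confidence bound, so Phi(S_0) = C(n,2) - 1 + 1/n^2, and only the
   updates of agents 0 and 1 move anyone: each sends its agent to the midpoint,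
   lowering Phi by 3/(4n^2).  Averaging over the n agents gives 3/(2n^3). *)

From mathcomp Require Import all_boot all_order all_algebra.
From mathcomp Require Import ring lra zify.
Set Implicit Arguments. Unset Strict Implicit. Unset Printing Implicit Defensive.
Import Order.TTheory GRing.Theory Num.Theory.
Local Open Scope ring_scope.

Section Edges.
Variable n : nat.

Lemma num_edgesE (R : pzSemiRingType) (e : rel 'I_n) :
  (num_edges e)%:R =
  \sum_(p : 'I_n * 'I_n | (p.1 < p.2)%N && e p.1 p.2) (1 : R).
Proof. by rewrite /num_edges -sum1_card natr_sum; apply: eq_bigl => p; rewrite inE. Qed.

Definition complete_graph : rel 'I_n := fun i j => i != j.

Lemma complete_graph_simple : simple_graph complete_graph.
Proof. by split=> [i j | i]; rewrite /complete_graph ?eqxx // eq_sym. Qed.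

Lemma num_edges_complete_graph : num_edges complete_graph = 'C(n, 2).
Proof.
rewrite /num_edges -sum1_card.
rewrite (eq_bigl (fun p : 'I_n * 'I_n => p.1 < p.2)%N); last first.
  move=> [i j]; rewrite inE /complete_graph /=; apply/andb_idr.
  by apply: contraTneq => ->; rewrite ltnn.
rewrite -(pair_big_dep xpredT (fun i j : 'I_n => i < j)%N (fun _ _ => 1%N)) /=.
rewrite (exchange_big_dep xpredT) //= -bin2_sum big_mkord.
apply: eq_bigr => j _.
rewrite -(big_ord_widen_cond _ xpredT (fun _ => 1%N) (ltnW (ltn_ord j))).
by rewrite sum1_card card_ord.
Qed.

End Edges.

Section Dynamics.
Variables (R : realFieldType) (n : nat) (e : rel 'I_n) (eps : R).

Lemma eq_potential (x y : 'I_n -> R) :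
  x =1 y -> potential e eps x = potential e eps y.
Proof. by move=> xy; apply: eq_bigr => p _; rewrite !xy. Qed.

Lemma hk_update_isolated (x : 'I_n -> R) v :
  nbhd e eps x v = [set v] -> hk_update e eps x v =1 x.
Proof.
move=> Nv w; rewrite /hk_update Nv big_set1 cards1 divr1.
by case: eqVneq => [->|].
Qed.

Lemma hk_update_pair (x : 'I_n -> R) v u : u != v ->
  nbhd e eps x v = [set v; u] ->
  hk_update e eps x v =1 (fun w => if w == v then (x v + x u) / 2 else x w).
Proof.
move=> uv Nv w; rewrite /hk_update Nv big_setU1 ?inE 1?(eq_sym v u) ?uv //.
by rewrite big_set1 cards2 (eq_sym v u) uv.
Qed.

Lemma potential_one_close_edge (x : 'I_n -> R) (i j : 'I_n) :
  0 <= eps -> (i < j)%N -> e i j ->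
  (forall p : 'I_n * 'I_n, (p.1 < p.2)%N -> e p.1 p.2 -> p != (i, j) ->
     eps <= `|x p.1 - x p.2|) ->
  potential e eps x =
  ((num_edges e)%:R - 1) * eps ^+ 2 + Num.min ((x i - x j) ^+ 2) (eps ^+ 2).
Proof.
move=> eps_ge0 lij eij far; rewrite num_edgesE /potential.
rewrite (bigD1 (i, j)) ?lij //= [in RHS](bigD1 (i, j)) ?lij //= addrC.
rewrite mulrBl mul1r mulrDl mul1r [eps ^+ 2 + _]addrC addrK mulr_suml.
congr (_ + _).
apply: eq_bigr => p /andP[/andP[lp ep] pij]; rewrite mul1r min_r //.
by rewrite -[_ ^+ 2 in X in _ <= X]real_normK ?num_real // lerXn2r ?nnegrE // far.
Qed.

End Dynamics.

Section Construction.
Variables (R : realFieldType) (n : nat).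

Local Notation K := (@complete_graph n.+2).

Definition agent0 : 'I_n.+2 := ord0.
Definition agent1 : 'I_n.+2 := Ordinal (isT : (1 < n.+2)%N).

Definition config (p q : R) (i : 'I_n.+2) : R :=
  if i == agent0 then p else if i == agent1 then q else 2 * i%:R.

Lemma config_agent0 p q : config p q agent0 = p.
Proof. by []. Qed.

Lemma config_agent1 p q : config p q agent1 = q.
Proof. by []. Qed.

Section Config.
Variables p q : R.
Hypotheses (p01 : 0 <= p <= 1) (q01 : 0 <= q <= 1).

Lemma config_inner_bounds (i : 'I_n.+2) : (i <= 1)%N -> 0 <= config p q i <= 1.
Proof. by rewrite /config; case: i => [[|[|i]] ?]. Qed.

Lemma config_outer (i : 'I_n.+2) : (1 < i)%N -> config p q i = 2 * i%:R.
Proof. by rewrite /config; case: i => [[|[|i]] ?]. Qed.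

Lemma config_far (u v : 'I_n.+2) : u != v -> (1 < u)%N || (1 < v)%N ->
  1 < `|config p q u - config p q v|.
Proof.
wlog luv : u v / (u < v)%N.
  move=> wlog_uv uv u_or_v; case: (ltngtP u v) => [uv'|vu|/val_inj/eqP].
  - exact: wlog_uv.
  - by rewrite distrC wlog_uv // 1?eq_sym // orbC.
  - by rewrite (negbTE uv).
move=> _ u_or_v; have v2 : (1 < v)%N by case/orP: u_or_v; lia.
rewrite (config_outer v2).
have v2R : 2 <= v%:R :> R by rewrite (ler_nat R 2).
case: (leqP u 1) => [u1|u2].
  have := config_inner_bounds u1; rewrite distrC; move: (config p q u) => z z01.
  by rewrite gtr0_norm; lra.
rewrite (config_outer u2).
have : u.+1%:R <= v%:R :> R by rewrite ler_nat.
rewrite -natr1 => uv; rewrite distrC gtr0_norm; lra.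
Qed.

Lemma nbhd_config_outer (v : 'I_n.+2) : (1 < v)%N ->
  nbhd K 1 (config p q) v = [set v].
Proof.
move=> v2; apply/setP => u; rewrite !inE /complete_graph.
case: eqVneq => [->|uv]; first by rewrite orbT.
by rewrite lt_geF ?config_far ?v2 ?orbT.
Qed.

Lemma nbhd_config_inner (v u : 'I_n.+2) : (v <= 1)%N -> (u <= 1)%N -> u != v ->
  nbhd K 1 (config p q) v = [set v; u].
Proof.
move=> v1 u1 uv; apply/setP => w; rewrite !inE /complete_graph.
case: (eqVneq w v) => [->|wv]; first by rewrite orbT.
rewrite orbF /=; case: (leqP w 1) => [w1|w2].
  have -> : w = u by apply/val_inj/eqP; move: wv uv; rewrite -!val_eqE /=; lia.
  have := config_inner_bounds u1; have := config_inner_bounds v1; rewrite eqxx ler_norml.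
  by move=> /andP[? ?] /andP[? ?]; apply/andP; split; lra.
rewrite lt_geF ?config_far ?w2 //; apply/esym/eqP => wu.
by move: w2; rewrite wu ltnNge u1.
Qed.

Lemma hk_update_config_outer (v : 'I_n.+2) : (1 < v)%N ->
  hk_update K 1 (config p q) v =1 config p q.
Proof. by move=> v2; apply/hk_update_isolated/nbhd_config_outer. Qed.

Lemma hk_update_config_agent0 :
  hk_update K 1 (config p q) agent0 =1 config ((p + q) / 2) q.
Proof.
move=> w; rewrite (hk_update_pair (u := agent1)) //; last exact: nbhd_config_inner.
by rewrite config_agent0 config_agent1 /config; case: eqP.
Qed.

Lemma hk_update_config_agent1 :
  hk_update K 1 (config p q) agent1 =1 config p ((p + q) / 2).
Proof.
move=> w; rewrite (hk_update_pair (u := agent0)) //; last exact: nbhd_config_inner.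
by rewrite config_agent0 config_agent1 addrC /config; case: eqP => [->|].
Qed.

Lemma potential_config :
  potential K 1 (config p q) = ('C(n.+2, 2))%:R - 1 + (p - q) ^+ 2.
Proof.
rewrite (potential_one_close_edge (i := agent0) (j := agent1)) ?ler01 //; last first.
  move=> [i j] /= lij _ ij; rewrite ltW // config_far ?orbT //.
    by apply: contraTneq lij => ->; rewrite ltnn.
  apply/orP; right; rewrite ltnNge; apply: contra ij => j1.
  by apply/eqP; congr pair; apply/val_inj => /=; lia.
rewrite num_edges_complete_graph config_agent0 config_agent1 expr1n mulr1 min_l //.
by case/andP: p01 => ? ?; case/andP: q01 => ? ?; nra.
Qed.

End Config.

Lemma potential_drop_config (p q : R) : 0 <= p <= 1 -> 0 <= q <= 1 ->
  \sum_(v : 'I_n.+2)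
     (potential K 1 (config p q) - potential K 1 (hk_update K 1 (config p q) v))
  = 3 / 2 * (p - q) ^+ 2.
Proof.
move=> p01 q01; have mid01 : 0 <= (p + q) / 2 <= 1.
  by case/andP: p01 => ? ?; case/andP: q01 => ? ?; apply/andP; split; lra.
rewrite (bigD1 agent0) // (bigD1 agent1) //= big1 ?addr0; last first.
  move=> v /andP[v1 v0].
  have v2 : (1 < v)%N by move: v0 v1; rewrite -!val_eqE /=; lia.
  by rewrite (eq_potential _ _ (hk_update_config_outer p01 q01 v2)) subrr.
rewrite (eq_potential _ _ (hk_update_config_agent0 p01 q01)).
rewrite (eq_potential _ _ (hk_update_config_agent1 p01 q01)).
by rewrite !potential_config //; field.
Qed.

Definition initial_config : 'I_n.+2 -> R := config 0 (n.+2)%:R^-1.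

Lemma inv_size_unit : 0 <= ((n.+2)%:R^-1 : R) <= 1.
Proof. by rewrite invr_ge0 ler0n invf_le1 ?ltr0n // (ler_nat R 1). Qed.

Lemma potential_initial_config :
  potential K 1 initial_config = ('C(n.+2, 2))%:R - 1 + (n.+2)%:R^-1 ^+ 2.
Proof. by rewrite potential_config ?lexx ?ler01 ?inv_size_unit // sub0r sqrrN. Qed.

Lemma expected_drop_initial_config :
  expected_drop K 1 initial_config = 3 / 2 / (n.+2)%:R ^+ 3.
Proof.
rewrite /expected_drop potential_drop_config ?lexx ?ler01 ?inv_size_unit //.
by field; rewrite gt_eqF //; have := ler0n R n; lra.
Qed.

End Construction.

Theorem theorem3 (R : realFieldType) :
  exists (eps : R), 0 < eps /\
  exists (a A b B c C : R), 0 < a /\ 0 < A /\ 0 < b /\ 0 < B /\ 0 < c /\ 0 < C /\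
  forall N : nat, exists n : nat, (N <= n)%N /\
    exists (e : rel 'I_n) (x : 'I_n -> R),
      simple_graph e /\
      a * n%:R ^+ 2 <= (num_edges e)%:R <= A * n%:R ^+ 2 /\
      b * n%:R ^+ 2 * eps ^+ 2 <= potential e eps x <= B * n%:R ^+ 2 * eps ^+ 2 /\
      c * eps ^+ 2 / n%:R ^+ 3 <= expected_drop e eps x <= C * eps ^+ 2 / n%:R ^+ 3.
Proof.
exists 1; split; first exact: ltr01.
exists (1 / 4), (1 / 2), (1 / 8), 1, (3 / 2), (3 / 2); do 6 (split; first lra).
move=> N; exists N.+4; split; first by rewrite !leqW.
exists (@complete_graph N.+4), (@initial_config R N.+2); split.
  exact: complete_graph_simple.
rewrite num_edges_complete_graph potential_initial_config.
rewrite expected_drop_initial_config expr1n !mulr1 lexx.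
have : 'C(N.+4, 2)%:R * 2 = N.+4%:R * N.+3%:R :> R.
  by rewrite -!natrM mulnC -(mul_bin_diag N.+4 1) bin1.
have := @inv_size_unit R N.+2.
have : 3 <= N.+3%:R :> R by rewrite (ler_nat R 3).
rewrite -[N.+4%:R]natr1.
move: N.+3%:R ('C(N.+4, 2)%:R) ((N.+3%:R + 1)^-1) => M E t M3 /andP[t0 t1] E2.
by split; [|split] => //; apply/andP; split; nra.
Qed.
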